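(* Let $(f,g),(f',g')\in\Theta$ both be $\tau$-lower bounded for some $\tau>0$. Then $$d_{\mathrm{logit}}^2(p_{f,g},p_{f',g'})\le 2|\log\tau|\;\mathcal L^1_{\mathrm{logit}}(p_{f,g},p_{f',g'}),\qquad\text{where }\ \mathcal L^1_{\mathrm{logit}}(p_{f,g},p_{f',g'})=\mathbb E_{x\sim p_x}\|u(x)-u'(x)\|_1.$$
   Context: Model class $\Theta$: pairs $(f,g)$, $f:\mathcal X\to\mathbb R^m$, $g:\mathcal Y\to\mathbb R^m$, $\mathcal Y$ finite with $k$ labels, $\sum_y g(y)=0$, inducing $p_{f,g}(y\mid x)\propto\exp(f(x)^\top g(y))$; $p_x$ is the data distribution. Logits $u(x)=(f(x)^\top g(y))_{y\in\mathcal Y}$; $d_{\mathrm{logit}}^2=\mathbb E_{x\sim p_x}\|u(x)-u'(x)\|_2^2$. $\tau$-lower bounded: $\min_y p_{f,g}(y\mid x)\ge\tau$ for $p_x$-a.e. $x$. (The two models may have different representation dimensions.) *)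

From HB Require Import structures.
From mathcomp Require Import all_boot all_order all_algebra.
From mathcomp Require Import all_classical all_reals all_analysis.
Set Implicit Arguments. Unset Strict Implicit. Unset Printing Implicit Defensive.
Import Order.TTheory GRing.Theory Num.Theory.
Local Open Scope ring_scope.

(* A model (f,g) with representation dimension m:
   f : X -> R^m is encoded as X -> 'I_m -> R, g : Y -> R^m as Y -> 'I_m -> R. *)

(* Membership in Theta: g is centered, sum_y g(y) = 0 (coordinatewise). *)
Definition centered (R : realType) (Y : finType) (m : nat)
  (g : Y -> 'I_m -> R) : Prop :=
  forall i : 'I_m, \sum_(y : Y) g y i = 0.

Definition logit (R : realType) (X : Type) (Y : finType) (m : nat)
  (f : X -> 'I_m -> R) (g : Y -> 'I_m -> R) (x : X) (y : Y) : R :=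
  \sum_(i < m) f x i * g y i.

Definition pmodel (R : realType) (X : Type) (Y : finType) (m : nat)
  (f : X -> 'I_m -> R) (g : Y -> 'I_m -> R) (x : X) (y : Y) : R :=
  expR (logit f g x y) / \sum_(z : Y) expR (logit f g x z).

Definition tau_lower_bounded (d : measure_display) (R : realType)
  (X : measurableType d) (P : probability X R) (Y : finType) (m : nat)
  (f : X -> 'I_m -> R) (g : Y -> 'I_m -> R) (tau : R) : Prop :=
  {ae P, forall x, forall y : Y, tau <= pmodel f g x y}.

Definition d_logit2 (d : measure_display) (R : realType)
  (X : measurableType d) (P : probability X R) (Y : finType) (m m' : nat)
  (f : X -> 'I_m -> R) (g : Y -> 'I_m -> R)
  (f' : X -> 'I_m' -> R) (g' : Y -> 'I_m' -> R) : \bar R :=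
  (\int[P]_x (\sum_(y : Y) (logit f g x y - logit f' g' x y) ^+ 2)%:E)%E.

Definition L1_logit (d : measure_display) (R : realType)
  (X : measurableType d) (P : probability X R) (Y : finType) (m m' : nat)
  (f : X -> 'I_m -> R) (g : Y -> 'I_m -> R)
  (f' : X -> 'I_m' -> R) (g' : Y -> 'I_m' -> R) : \bar R :=
  (\int[P]_x (\sum_(y : Y) `|logit f g x y - logit f' g' x y|)%:E)%E.

From HB Require Import structures.
From mathcomp Require Import all_boot all_order all_algebra.
From mathcomp Require Import all_classical all_reals all_analysis.
From mathcomp Require Import measurable_realfun.
Import Order.TTheory GRing.Theory Num.Theory.
Set Implicit Arguments. Unset Strict Implicit. Unset Printing Implicit Defensive.
Local Open Scope ring_scope.

(* If every softmax probability is at least tau, then any two logits differ by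
   at least ln tau; for centered logits, averaging over the labels bounds each
   logit by |ln tau|.  Two vectors bounded by c in sup-norm satisfy
   (u - v)^2 <= 2c |u - v| coordinatewise, and integrating over x gives the
   claim. *)

Definition softmax (R : realType) (Y : finType) (u : Y -> R) (y : Y) : R :=
  expR (u y) / \sum_z expR (u z).

Section SoftmaxLowerBound.
Variables (R : realType) (Y : finType) (u : Y -> R) (tau : R).
Hypotheses (tau_gt0 : 0 < tau) (softmax_ge : forall y, tau <= softmax u y).

Lemma ln_le_sub_of_softmax_ge y z : ln tau <= u y - u z.
Proof.
have expR_le_sum : expR (u z) <= \sum_z expR (u z).
  by rewrite (bigD1 z) //= lerDl sumr_ge0 // => i _; exact: expR_ge0.
have sum_gt0 : 0 < \sum_z expR (u z) by apply: lt_le_trans expR_le_sum; exact: expR_gt0.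
have tau_le : tau <= expR (u y - u z).
  apply: (le_trans (softmax_ge y)); rewrite /softmax expRB.
  by apply: ler_wpM2l; [exact: expR_ge0 | rewrite lef_pV2 ?posrE ?expR_gt0].
by rewrite -[u y - u z]expRK ler_ln ?posrE ?expR_gt0.
Qed.

Hypothesis u_centered : \sum_z u z = 0.

Lemma norm_le_abs_ln_of_softmax_ge y : `|u y| <= `|ln tau|.
Proof.
have card_gt0 : (0 < #|Y|%:R :> R) by rewrite ltr0n; apply/card_gt0P; exists y.
have sum_gaps : \sum_z (u y - u z) = #|Y|%:R * u y.
  by rewrite sumrB u_centered subr0 sumr_const mulr_natl.
have sum_const c : \sum_(z : Y) c = #|Y|%:R * c by rewrite sumr_const mulr_natl.
have ln_le : ln tau <= u y.
  rewrite -(ler_pM2l card_gt0) -sum_gaps -sum_const.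
  by apply: ler_sum => z _; exact: ln_le_sub_of_softmax_ge.
have le_Nln : u y <= - ln tau.
  rewrite -(ler_pM2l card_gt0) -sum_gaps -sum_const.
  by apply: ler_sum => z _; rewrite lerNr opprB; exact: ln_le_sub_of_softmax_ge.
rewrite ler_norml; apply/andP; split.
- by apply: le_trans ln_le; rewrite lerNl -normrN; exact: ler_norm.
- by apply: le_trans le_Nln _; rewrite -normrN; exact: ler_norm.
Qed.

End SoftmaxLowerBound.

Lemma sum_sqr_sub_le_of_norm_le (R : realDomainType) (Y : finType) (u v : Y -> R)
  (c : R) :
  (forall y, `|u y| <= c) -> (forall y, `|v y| <= c) ->
  \sum_y (u y - v y) ^+ 2 <= (2 * c) * \sum_y `|u y - v y|.
Proof.
move=> u_le v_le; rewrite mulr_sumr; apply: ler_sum => y _.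
rewrite -real_normK ?num_real // expr2 ler_wpM2r //.
by apply: (le_trans (ler_normB _ _)); rewrite mulr2n mulrDl mul1r lerD.
Qed.

Lemma logit_centered (R : realType) (X : Type) (Y : finType) (m : nat)
  (f : X -> 'I_m -> R) (g : Y -> 'I_m -> R) (x : X) :
  centered g -> \sum_y logit f g x y = 0.
Proof.
move=> g_centered; rewrite /logit exchange_big /=.
by apply: big1 => i _; rewrite -mulr_sumr g_centered mulr0.
Qed.

Lemma measurable_logit (d : measure_display) (R : realType)
  (X : measurableType d) (Y : finType) (m : nat)
  (f : X -> 'I_m -> R) (g : Y -> 'I_m -> R) (y : Y) :
  (forall i, measurable_fun setT (fun x => f x i)) ->
  measurable_fun setT (fun x => logit f g x y).
Proof.
move=> mf; apply: measurable_sum => i.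
by apply: measurable_funM => //; exact: measurable_cst.
Qed.

Theorem mainTheorem8 (d : measure_display) (R : realType)
  (X : measurableType d) (P : probability X R) (Y : finType) (m m' : nat)
  (f : X -> 'I_m -> R) (g : Y -> 'I_m -> R)
  (f' : X -> 'I_m' -> R) (g' : Y -> 'I_m' -> R) (tau : R) :
  (forall i : 'I_m, measurable_fun setT (fun x => f x i)) ->
  (forall i : 'I_m', measurable_fun setT (fun x => f' x i)) ->
  centered g -> centered g' ->
  0 < tau ->
  tau_lower_bounded P f g tau -> tau_lower_bounded P f' g' tau ->
  (d_logit2 P f g f' g' <= (2 * `|ln tau|)%:E * L1_logit P f g f' g')%E.
Proof.
move=> mf mf' cg cg' tau_gt0 lb lb'.
have m_diff y : measurable_fun setT
    (fun x => logit f g x y - logit f' g' x y).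
  by apply: measurable_funB; exact: measurable_logit.
have m_L1 : measurable_fun setT
    (fun x => \sum_y `|logit f g x y - logit f' g' x y|).
  by apply: measurable_sum => y; apply: measurableT_comp.
have c_ge0 : 0 <= 2 * `|ln tau| by rewrite mulr_ge0.
rewrite /d_logit2 /L1_logit -ge0_integralZl_EFin //; last first.
- by apply/measurable_EFinP.
- by move=> x _; rewrite lee_fin sumr_ge0.
apply: ae_ge0_le_integral => //.
- by move=> x _; rewrite lee_fin sumr_ge0 // => y _; exact: sqr_ge0.
- by apply/measurable_EFinP; apply: measurable_sum => y; exact: measurable_funX.
- by move=> x _; rewrite -EFinM lee_fin mulr_ge0 // sumr_ge0.
- by apply/measurable_EFinP; apply: measurable_funM => //; exact: measurable_cst.
apply: filterS2 lb lb' => x lbx lbx' _.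
rewrite -EFinM lee_fin; apply: sum_sqr_sub_le_of_norm_le => y;
  apply: norm_le_abs_ln_of_softmax_ge => //; exact: logit_centered.
Qed.
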